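(* Let $\alpha\in(0,1)$, $a_1,a_2\in\mathbb{R}$, and let $A$ be the $N\times N$ matrix defined below with $a_0=a_2$ (symmetric case). Let $R_N$ denote the set of points $(a_2,a_1)\in\mathbb{R}^2$ for which every eigenvalue $\lambda$ of $A$ (all of which are real) satisfies $1-2^{\alpha}<\lambda<1$. Then: (i) if $N\ge 2$ is even, $R_N$ is the open interior of the quadrilateral with vertices $Q_1=(0,1)$, $Q_2=\left(-2^{\alpha-2},\,2^{\alpha-1}+1-2^{\alpha}\right)$, $Q_3=(0,1-2^{\alpha})$, $Q_4=\left(2^{\alpha-2},\,1-2^{\alpha-1}\right)$; (ii) if $N\ge 3$ is odd, $R_N$ is the open interior of the quadrilateral with vertices $Q_1=(0,1)$, $Q_2'=\left(-\frac{2^{\alpha-1}}{1+\cos(\pi/N)},\,\frac{2^{\alpha}}{1+\cos(\pi/N)}+1-2^{\alpha}\right)$, $Q_3=(0,1-2^{\alpha})$, $Q_4'=\left(\frac{2^{\alpha-1}}{1+\cos(\pi/N)},\,1-\frac{2^{\alpha}}{1+\cos(\pi/N)}\right)$. (Here points are written in the $a_2a_1$-plane, first coordinate $a_2$, second coordinate $a_1$.) Consequently $R_N$ is the stable region of the zero solution of the linear fractional coupled map lattice with this $A$.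
   Context: Fractional-order linear coupled map lattice: for $\alpha\in(0,1)$, $X_{t+1}=X_0+\sum_{j=0}^{t}\frac{\Gamma(t-j+\alpha)}{\Gamma(\alpha)\Gamma(t-j+1)}(A-I)X_j$, $X_t\in\mathbb{R}^N$. Connectivity matrix for $N\ge 3$: $A$ is the $N\times N$ circulant matrix with $A_{k,k}=a_1$, $A_{k,k+1}=a_2$, $A_{k,k-1}=a_0$ (indices taken modulo $N$, i.e. periodic boundary conditions: $A_{1,N}=a_0$, $A_{N,1}=a_2$), all other entries $0$; for $N=2$, $A=\begin{pmatrix}a_1&a_0+a_2\\ a_0+a_2&a_1\end{pmatrix}$; for $N=1$, $A=(a_0+a_1+a_2)$. Stability criterion used to define ''stable region'': the zero solution is asymptotically stable exactly when every eigenvalue of $A$ lies in the open region enclosed by the curve $\beta(t)=1+e^{it}(1-e^{-it})^{\alpha}$, $0\le t\le 2\pi$ (principal branch), and a real number lies in this region iff it lies in $(1-2^{\alpha},1)$. *)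

From HB Require Import structures.
From mathcomp Require Import all_boot all_order all_algebra.
From mathcomp Require Import all_classical all_reals all_analysis.
Set Implicit Arguments. Unset Strict Implicit. Unset Printing Implicit Defensive.
Import Order.TTheory GRing.Theory Num.Theory.
Import numFieldNormedType.Exports.
Local Open Scope ring_scope.
Local Open Scope classical_set_scope.

Definition cml_matrix (R : pzRingType) (N : nat) (a0 a1 a2 : R) : 'M[R]_N :=
  \matrix_(i < N, j < N)
    if (3 <= N)%N then
      (if (j : nat) == i then a1
       else if (j : nat) == (i.+1 %% N)%N then a2
       else if (j : nat) == ((i + N).-1 %% N)%N then a0
       else 0)
    else if N == 2%N then (if (i : nat) == j then a1 else a0 + a2)
    else a0 + a1 + a2.

Definition RN (R : realType) (alpha : R) (N : nat) : set (R * R) :=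
  [set p | forall lambda : R,
      eigenvalue (cml_matrix N p.1 p.2 p.1) lambda ->
      1 - 2 `^ alpha < lambda < 1].

Definition quadrilateral (R : realType) (P1 P2 P3 P4 : R * R) : set (R * R) :=
  [set p | exists t1 t2 t3 t4 : R,
      [/\ [/\ 0 <= t1, 0 <= t2, 0 <= t3 & 0 <= t4],
          t1 + t2 + t3 + t4 = 1,
          p.1 = t1 * P1.1 + t2 * P2.1 + t3 * P3.1 + t4 * P4.1 &
          p.2 = t1 * P1.2 + t2 * P2.2 + t3 * P3.2 + t4 * P4.2]].

(* The symmetric lattice matrix A is circulant, so for theta_k = 2 pi k / N every
   column j |-> cos (j theta_k + psi) is an eigenvector for a1 + 2 a2 cos theta_k;
   discrete Fourier inversion shows that these are all the eigenvalues.  Being affine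
   in cos theta_k, they all lie in (1 - 2^alpha, 1) iff the two extreme ones do:
   cos theta_k is largest (= 1) at k = 0 and smallest at k = N/2 (rounded down), where
   it equals -1 for N even and -cos (pi / N) for N odd.  The two extreme conditions
   cut out an open parallelogram in the (a2, a1)-plane: the interior of the
   quadrilateral. *)

From HB Require Import structures.
From mathcomp Require Import all_boot all_order all_algebra.
From mathcomp Require Import all_classical all_reals all_analysis.
From mathcomp Require Import ring lra zify.
Import Order.TTheory GRing.Theory Num.Theory.
Import numFieldNormedType.Exports.
Local Open Scope classical_set_scope.
Local Open Scope ring_scope.

Lemma succ_modn (N i : nat) : (i < N)%N ->
  (i.+1 %% N = if (i.+1 < N)%N then i.+1 else 0)%N.
Proof.
move=> ltiN; case: ltnP => leNi; first by rewrite modn_small.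
have -> : i.+1 = N by lia.
by rewrite modnn.
Qed.

Lemma pred_modn (N i : nat) : (i < N)%N ->
  ((i + N).-1 %% N = if (0 < i)%N then i.-1 else N.-1)%N.
Proof.
move=> ltiN; case: ltnP => [i_gt0 | lei0].
  have -> : (i + N).-1 = (i.-1 + N)%N by lia.
  by rewrite modnDr modn_small //; lia.
have -> : i = 0%N by lia.
by rewrite add0n modn_small //; lia.
Qed.

Lemma eigenvalue_col_sym {F : fieldType} {n : nat} {M : 'M[F]_n} {c : 'cV_n} {mu : F} :
  M^T = M -> M *m c = mu *: c -> c != 0 -> eigenvalue M mu.
Proof.
move=> symM Mc c_neq0; apply/eigenvalueP; exists c^T; last by rewrite trmx_eq0.
by rewrite -[in LHS]symM -trmx_mul Mc linearZ.
Qed.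

Lemma left_right_eigen_mulmx_eq0 {F : fieldType} {n : nat} {M : 'M[F]_n}
    {v : 'rV_n} {c : 'cV_n} {lam mu : F} :
  v *m M = lam *: v -> M *m c = mu *: c -> lam != mu -> v *m c = 0.
Proof.
move=> vM Mc; rewrite -subr_eq0 => lam_neq_mu.
have : (lam - mu) *: (v *m c) = 0.
  by rewrite scalerBl scalemxAl -vM scalemxAr -Mc mulmxA subrr.
by move/eqP; rewrite scaler_eq0 (negbTE lam_neq_mu) => /eqP.
Qed.

Lemma sin_mul_sum_cos {R : realType} (h : R) (n : nat) :
  2 * sin h * \sum_(k < n) cos (k%:R * (h *+ 2)) = sin (n%:R * (h *+ 2) - h) + sin h.
Proof.
elim: n => [|n IHn]; first by rewrite big_ord0 mulr0 mul0r sub0r sinN addNr.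
rewrite big_ord_recr /= mulrDr IHn.
have -> : n.+1%:R * (h *+ 2) - h = n%:R * (h *+ 2) + h by rewrite -natr1; ring.
by rewrite !sinD cosN sinN; ring.
Qed.

Lemma ler_cos {R : realType} : {in `[0, pi] &, {mono (@cos R) : x y /~ y <= x}}.
Proof. by move=> x y x_in y_in; rewrite !leNgt ltr_cos. Qed.

Definition unity_angle (R : realType) (N k : nat) : R := pi *+ 2 * k%:R / N%:R.

Definition fourier_col {R : realType} (N : nat) (theta psi : R) : 'cV[R]_N :=
  \col_(j < N) cos (j%:R * theta + psi).

Section UnityAngle.
Variables (R : realType) (N : nat).
Hypothesis N_gt0 : (0 < N)%N.
Local Notation theta := (unity_angle R N).

Let N_neq0 : N%:R != 0 :> R. Proof. by rewrite pnatr_eq0 -lt0n. Qed.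

Lemma natr_mul_unity_angle (k : nat) : N%:R * theta k = pi *+ 2 *+ k.
Proof. by rewrite /unity_angle -mulr_natr; field. Qed.

Lemma cos_modn_unity_angle (n k : nat) (psi : R) :
  cos ((n %% N)%N%:R * theta k + psi) = cos (n%:R * theta k + psi).
Proof.
have -> : n%:R * theta k = (n %% N)%N%:R * theta k + pi *+ 2 *+ (k * (n %/ N)).
  by rewrite [in LHS](divn_eq n N) natrD natrM mulrDl -mulrA natr_mul_unity_angle; ring.
by rewrite addrAC (periodicn (@cosD2pi R)).
Qed.

Lemma sum_cos_unity_angle (m : nat) : (0 < m < N)%N ->
  \sum_(k < N) cos (k%:R * theta m) = 0.
Proof.
case/andP => m_gt0 ltmN.
pose h : R := pi * m%:R / N%:R.
have sin_h_gt0 : 0 < sin h.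
  apply: sin_gt0_pi; apply/andP; split.
    by rewrite /h divr_gt0 ?mulr_gt0 ?pi_gt0 ?ltr0n.
  by rewrite /h ltr_pdivrMr ?ltr0n // ltr_pM2l ?pi_gt0 // ltr_nat.
have theta_m : theta m = h *+ 2 by rewrite /unity_angle /h; ring.
have := sin_mul_sum_cos h N.
rewrite -theta_m natr_mul_unity_angle [_ - h]addrC (periodicn (@sinD2pi R)) sinN addNr.
by move/eqP; rewrite !mulf_eq0 pnatr_eq0 (gt_eqF sin_h_gt0) /= => /eqP.
Qed.

Lemma sum_cos_unity_angle_sub (i l : nat) : (i < N)%N -> (l < N)%N ->
  \sum_(k < N) cos (i%:R * theta k - l%:R * theta k) = (i == l)%:R * N%:R.
Proof.
move=> ltiN ltlN; case: ltngtP => [ltil | ltli | ->]; rewrite ?mul0r.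
- rewrite -[RHS](@sum_cos_unity_angle (l - i)) ?subn_gt0 ?ltil //=; last by lia.
  apply: eq_bigr => k _; rewrite -cosN /unity_angle natrB 1?ltnW //; congr cos; ring.
- rewrite -[RHS](@sum_cos_unity_angle (i - l)) ?subn_gt0 ?ltli //=; last by lia.
  apply: eq_bigr => k _; rewrite /unity_angle natrB 1?ltnW //; congr cos; ring.
- by under eq_bigr => k _ do rewrite subrr cos0; rewrite sumr_const card_ord mul1r.
Qed.

Lemma fourier_inversion (v : 'rV[R]_N) (l : 'I_N) :
  N%:R * v 0 l = \sum_(k < N) (v *m fourier_col N (theta k) (- (l%:R * theta k))) 0 0.
Proof.
have dot_col k : (v *m fourier_col N (theta k) (- (l%:R * theta k))) 0 0 =
    \sum_(i < N) v 0 i * cos (i%:R * theta k - l%:R * theta k).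
  by rewrite mxE; apply: eq_bigr => i _; rewrite mxE.
under eq_bigr => k _ do rewrite dot_col.
rewrite exchange_big /=.
under eq_bigr => i _ do rewrite -mulr_sumr sum_cos_unity_angle_sub //.
rewrite (bigD1 l) //= eqxx mul1r mulrC big1 ?addr0 // => i /negbTE neq_il.
by rewrite -val_eqE in neq_il; rewrite neq_il mul0r mulr0.
Qed.

Lemma unity_angle_ge0 (k : nat) : 0 <= theta k.
Proof.
by rewrite /unity_angle divr_ge0 ?ler0n // mulr_ge0 ?ler0n // mulrn_wge0 // pi_ge0.
Qed.

Lemma unity_angle_gt0 (k : nat) : (0 < k)%N -> 0 < theta k.
Proof.
move=> k_gt0.
by rewrite /unity_angle divr_gt0 ?ltr0n // mulr_gt0 ?ltr0n // mulrn_wgt0 // pi_gt0.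
Qed.

Lemma ler_unity_angle : {homo theta : k m / (k <= m)%N >-> k <= m}.
Proof.
move=> k m le_km; rewrite /unity_angle ler_pM2r ?invr_gt0 ?ltr0n //.
by rewrite ler_pM2l ?ler_nat // mulrn_wgt0 ?pi_gt0.
Qed.

Lemma unity_angle_le_pi (k : nat) : (k.*2 <= N)%N -> theta k <= pi.
Proof.
move=> le_2k_N; rewrite /unity_angle ler_pdivrMr ?ltr0n // -(mulr_natr pi 2) -mulrA.
by rewrite ler_pM2l ?pi_gt0 // -natrM ler_nat mul2n.
Qed.

Lemma cos_unity_angle_subn (k : nat) : (k <= N)%N -> cos (theta (N - k)) = cos (theta k).
Proof.
move=> le_kN; rewrite -[RHS]cosN -[RHS](periodicn (@cosD2pi R) 1).
by congr cos; rewrite /unity_angle natrB //; field.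
Qed.

Lemma cos_unity_angle_half_le (k : nat) : (k < N)%N -> cos (theta N./2) <= cos (theta k).
Proof.
suff half_le m : (m <= N./2)%N -> cos (theta N./2) <= cos (theta m).
  move=> ltkN; case: (leqP k N./2) => [|lt_half_k]; first exact: half_le.
  rewrite -(@cos_unity_angle_subn k (ltnW ltkN)); apply: half_le.
  by move: lt_half_k; rewrite geq_half_double ltn_half_double -!addnn; lia.
move=> le_m_half; have theta_in j : (j <= N./2)%N -> theta j \in `[0, pi].
  by rewrite geq_half_double in_itv /= unity_angle_ge0 => /unity_angle_le_pi.
by rewrite ler_cos ?theta_in ?ler_unity_angle.
Qed.

Lemma unity_angle_half_even : ~~ odd N -> theta N./2 = pi.
Proof.
move=> /even_halfK N_eq; have Nr : N%:R = 2 * (N./2)%:R :> R.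
  by rewrite -[in LHS]N_eq -mul2n natrM.
rewrite /unity_angle Nr; field.
by apply: contra N_neq0 => /eqP h0; rewrite Nr h0 mulr0.
Qed.

Lemma unity_angle_half_odd : odd N -> theta N./2 = pi - pi / N%:R.
Proof.
move=> oddN; have Nr : N%:R = 1 + 2 * (N./2)%:R :> R.
  by rewrite -[in LHS](odd_double_half N) oddN -mul2n natrD natrM.
by rewrite /unity_angle Nr; field; rewrite -Nr.
Qed.

Lemma cos_unity_angle_half_lt1 : (2 <= N)%N -> cos (theta N./2) < 1.
Proof.
rewrite -half_gt0 => half_gt0; have le_half_half := leqnn N./2.
rewrite geq_half_double in le_half_half.
rewrite -cos0 ltr_cos ?in_itv /= ?lexx ?pi_ge0 ?unity_angle_ge0 ?unity_angle_le_pi //.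
exact: unity_angle_gt0.
Qed.

End UnityAngle.

Section CmlSpectrum.
Variables (R : realType) (N : nat) (a1 a2 : R).
Hypothesis N_ge2 : (2 <= N)%N.
Local Notation A := (cml_matrix N a2 a1 a2).
Local Notation theta := (unity_angle R N).

Let N_gt0 : (0 < N)%N. Proof. by rewrite (leq_trans _ N_ge2). Qed.

Lemma cml_symE (i j : 'I_N) :
  A i j = a1 * ((j : nat) == i)%:R + a2 * ((j : nat) == (i.+1 %% N)%N)%:R
          + a2 * ((j : nat) == ((i + N).-1 %% N)%N)%:R.
Proof.
rewrite mxE; case: ifP => [N_ge3 | N_lt3].
  rewrite succ_modn // pred_modn //.
  case: eqVneq => ji; case: eqVneq => jS; case: eqVneq => jP;
    rewrite ?mulr1 ?mulr0 ?addr0 ?add0r //; exfalso;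
    move: ji jS jP (ltn_ord i) (ltn_ord j); do 2 case: ifP; lia.
have eN : N = 2%N by lia.
by subst N; case: i => [[|[|i]] ?] //=; case: j => [[|[|j]] ?] //=; ring.
Qed.

Lemma trmx_cml : A^T = A.
Proof.
apply/matrixP => i j; rewrite mxE !cml_symE eq_sym.
have [ltiN ltjN] := (ltn_ord i, ltn_ord j).
have -> : ((i : nat) == (j.+1 %% N)%N) = ((j : nat) == ((i + N).-1 %% N)%N).
  by rewrite succ_modn // pred_modn //; do 2 case: ifP; move=> *; apply/eqP/eqP; lia.
have -> : ((i : nat) == ((j + N).-1 %% N)%N) = ((j : nat) == (i.+1 %% N)%N).
  by rewrite succ_modn // pred_modn //; do 2 case: ifP; move=> *; apply/eqP/eqP; lia.
ring.
Qed.

Lemma cml_mul_col (f : nat -> R) (i : 'I_N) :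
  (A *m \col_(j < N) f j) i 0 =
  a1 * f i + a2 * f (i.+1 %% N)%N + a2 * f ((i + N).-1 %% N)%N.
Proof.
have pick k : (k < N)%N -> \sum_(j < N) ((j : nat) == k)%:R * f j = f k.
  move=> ltkN; rewrite (bigD1 (Ordinal ltkN)) //= eqxx mul1r big1 ?addr0 // => j.
  by rewrite -val_eqE => /negbTE ->; rewrite mul0r.
rewrite mxE; under eq_bigr => j _ do rewrite cml_symE mxE !mulrDl -!mulrA.
by rewrite !big_split -!mulr_sumr /= !pick // ltn_pmod.
Qed.

Lemma cml_mul_fourier (k : nat) (psi : R) :
  A *m fourier_col N (theta k) psi =
  (a1 + 2 * a2 * cos (theta k)) *: fourier_col N (theta k) psi.
Proof.
apply/colP => i; rewrite /fourier_col.
rewrite (cml_mul_col (fun n => cos (n%:R * theta k + psi))).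
rewrite !mxE !cos_modn_unity_angle //.
have -> : i.+1%:R * theta k + psi = i%:R * theta k + psi + theta k.
  by rewrite -natr1; ring.
have -> : ((i + N).-1)%:R * theta k + psi = i%:R * theta k + psi - theta k + pi *+ 2 *+ k.
  rewrite -(@natr_mul_unity_angle R N N_gt0) -subn1 natrB ?natrD; last by lia.
  ring.
set x := i%:R * theta k + psi.
by rewrite (periodicn (@cosD2pi R)) cosB [cos (x + _)]cosD; ring.
Qed.

Lemma cml_eigenvalueP (lam : R) :
  eigenvalue A lam <-> exists2 k, (k < N)%N & lam = a1 + 2 * a2 * cos (theta k).
Proof.
split=> [/eigenvalueP [v vA v_neq0] | [k _ ->]].
  have [//|no_k] := pselect (exists2 k, (k < N)%N & lam = a1 + 2 * a2 * cos (theta k)).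
  suff v0 : v = 0 by rewrite v0 eqxx in v_neq0.
  apply/rowP => l.
  apply: (@mulfI _ (N%:R)); first by rewrite pnatr_eq0 -lt0n.
  rewrite mxE mulr0 (@fourier_inversion R N N_gt0); apply: big1 => k _.
  rewrite (left_right_eigen_mulmx_eq0 vA (cml_mul_fourier _ _)) ?mxE //.
  by apply/eqP => lam_eq; apply: no_k; exists k.
apply: (eigenvalue_col_sym trmx_cml (cml_mul_fourier k 0)).
apply/eqP => /colP /(_ (Ordinal N_gt0)); rewrite !mxE mul0r add0r cos0.
exact/eqP/oner_neq0.
Qed.

End CmlSpectrum.

(* The pairs (a2, a1) for which the eigenvalue a1 + 2 a2 c lies in I. *)
Definition cml_strip {R : realType} (c : R) (I : interval R) : set (R * R) :=
  [set p | p.2 + 2 * p.1 * c \in I].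

Lemma affine_mem_itv {R : realFieldType} (x y a b c t : R) : c <= t <= 1 ->
  a + b \in `]x, y[ -> a + b * c \in `]x, y[ -> a + b * t \in `]x, y[.
Proof.
rewrite !in_itv /= => /andP [le_ct le_t1] /andP [? ?] /andP [? ?].
by apply/andP; case: (lerP 0 b) => b_sign; split; nra.
Qed.

Lemma RN_cml_strips (R : realType) (alpha : R) (N : nat) : (2 <= N)%N ->
  let I := (`]1 - 2 `^ alpha, 1[ : interval R) in
  RN alpha N = cml_strip 1 I `&` cml_strip (cos (unity_angle R N N./2)) I.
Proof.
move=> N_ge2 I; apply/seteqP; split => [p RNp | p [in_1 in_c] lam].
  have strip_k k : (k < N)%N -> cml_strip (cos (unity_angle R N k)) I p.
    by move=> ltkN; rewrite /cml_strip /= in_itv; apply/RNp/cml_eigenvalueP => //; exists k.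
  split; last by apply: strip_k; rewrite ltn_half_double; lia.
  by have := strip_k 0%N; rewrite /unity_angle mulr0 mul0r cos0; apply; lia.
case/(cml_eigenvalueP _ _ _ _ N_ge2) => k ltkN ->.
suff : p.2 + 2 * p.1 * cos (unity_angle R N k) \in I by rewrite in_itv.
rewrite /cml_strip /= mulr1 in in_1.
apply: (@affine_mem_itv R _ _ _ _ _ _ _ in_1 in_c).
by rewrite cos_unity_angle_half_le ?cos_le1 //; lia.
Qed.

Section Strips.
Variable R : realType.
Implicit Types (c x y : R).

Lemma open_cml_strip c x y : open (cml_strip c `]x, y[).
Proof.
apply: (@open_comp _ _ (fun p : R * R => p.2 + 2 * p.1 * c) `]x, y[%classic);
  last exact: itv_open.
move=> p _; apply: continuousD; first exact: cvg_snd.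
by apply: continuousM; [apply: continuousM; [exact: cvg_cst | exact: cvg_fst] | exact: cvg_cst].
Qed.

Lemma interior_cml_strip c x y :
  interior (cml_strip c `[x, y]) `<=` cml_strip c `]x, y[.
Proof.
move=> p /nbhs_ballP [e /= e_gt0 pS].
have shift d : `|d| < e -> x <= p.2 + d + 2 * p.1 * c <= y.
  move=> lt_d_e; have : cml_strip c `[x, y] (p.1, p.2 + d).
    apply: pS; split; first exact: ballxx.
    by rewrite /= -ball_normE /= opprD addNKr normrN.
  by rewrite /cml_strip /= in_itv.
have half_lt : `|e / 2| < e by rewrite gtr0_norm ?divr_gt0 //; lra.
have /andP [lo_up hi_up] := shift _ half_lt.
rewrite -normrN in half_lt.
have /andP [lo_dn hi_dn] := shift _ half_lt.
by rewrite /cml_strip /= in_itv /=; apply/andP; split; lra.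
Qed.

Lemma interior_cml_strips c1 c2 x y :
  interior (cml_strip c1 `[x, y] `&` cml_strip c2 `[x, y]) =
  cml_strip c1 `]x, y[ `&` cml_strip c2 `]x, y[.
Proof.
apply/seteqP; split => [p p_in | ].
  by split; apply: interior_cml_strip; apply: interiorS p_in => q [].
rewrite -open_subsetE; last exact: openI (open_cml_strip _ _ _) (open_cml_strip _ _ _).
by apply: setISS => p; rewrite /cml_strip /= !in_itv /= => /andP [? ?];
  apply/andP; split; apply: ltW.
Qed.

End Strips.

Lemma quadrilateral_cml_strips (R : realType) (s c : R) : 0 < s -> c != 1 ->
  quadrilateral (0, 1) (- (s / 2 / (1 - c)), s / (1 - c) + 1 - s) (0, 1 - s)
    (s / 2 / (1 - c), 1 - s / (1 - c)) =
  cml_strip 1 `[1 - s, 1] `&` cml_strip c `[1 - s, 1].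
Proof.
move=> s_gt0 c_neq1; have c1_neq0 : 1 - c != 0 by rewrite subr_eq0 eq_sym.
have s_neq0 : s != 0 by rewrite gt_eqF.
rewrite /cml_strip; apply/seteqP; split => p /=.
  case=> t1 [t2 [t3 [t4 [[t1_ge0 t2_ge0 t3_ge0 t4_ge0] t_sum p1E p2E]]]].
  have t1E : t1 = 1 - t2 - t3 - t4 by lra.
  have -> : p.2 + 2 * p.1 * 1 = 1 - s * (t2 + t3) by rewrite p1E p2E /= t1E; field.
  have -> : p.2 + 2 * p.1 * c = 1 - s * (t3 + t4) by rewrite p1E p2E /= t1E; field.
  rewrite !in_itv /=; split; apply/andP; split; nra.
rewrite !in_itv /= mulr1 => -[/andP [u_ge u_le] /andP [w_ge w_le]].
pose x := (p.2 + 2 * p.1 - (1 - s)) / s.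
pose y := (p.2 + 2 * p.1 * c - (1 - s)) / s.
have [x_ge0 x_le1] : 0 <= x /\ x <= 1.
  by split; [apply: divr_ge0 | rewrite /x ler_pdivrMr // mul1r]; lra.
have [y_ge0 y_le1] : 0 <= y /\ y <= 1.
  by split; [apply: divr_ge0 | rewrite /y ler_pdivrMr // mul1r]; lra.
exists (x * y), ((1 - x) * y), ((1 - x) * (1 - y)), (x * (1 - y)); split.
- by split; apply: mulr_ge0; lra.
- by ring.
- by rewrite /x /y /=; field; rewrite c1_neq0 s_neq0.
- by rewrite /x /y /=; field; rewrite c1_neq0 s_neq0.
Qed.

Lemma RN_interior_quadrilateral (R : realType) (alpha : R) (N : nat) : (2 <= N)%N ->
  let s := 2 `^ alpha in let c := cos (unity_angle R N N./2) in
  RN alpha N = interior (quadrilateral (0, 1) (- (s / 2 / (1 - c)), s / (1 - c) + 1 - s)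
                          (0, 1 - s) (s / 2 / (1 - c), 1 - s / (1 - c))).
Proof.
move=> N_ge2 s c; rewrite quadrilateral_cml_strips ?powR_gt0 //; last first.
  by rewrite lt_eqF // cos_unity_angle_half_lt1 // (leq_trans _ N_ge2).
by rewrite interior_cml_strips RN_cml_strips.
Qed.

Lemma powR2_subr1 (R : realType) (x : R) : 2 `^ (x - 1) = 2 `^ x / 2.
Proof. by rewrite powRB ?powRr1 // pnatr_eq0 implybT. Qed.

Theorem theorem3 (R : realType) (alpha : R) (halpha0 : 0 < alpha) (halpha1 : alpha < 1) :
  (forall N : nat, (2 <= N)%N -> ~~ odd N ->
     RN alpha N =
     interior (quadrilateral
       (0, 1)
       (- (2 `^ (alpha - 2)), 2 `^ (alpha - 1) + 1 - 2 `^ alpha)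
       (0, 1 - 2 `^ alpha)
       (2 `^ (alpha - 2), 1 - 2 `^ (alpha - 1)))) /\
  (forall N : nat, (3 <= N)%N -> odd N ->
     let c := 1 + cos (pi / N%:R) in
     RN alpha N =
     interior (quadrilateral
       (0, 1)
       (- (2 `^ (alpha - 1) / c), 2 `^ alpha / c + 1 - 2 `^ alpha)
       (0, 1 - 2 `^ alpha)
       (2 `^ (alpha - 1) / c, 1 - 2 `^ alpha / c))).
Proof.
have -> : alpha - 2 = alpha - 1 - 1 by ring.
rewrite !powR2_subr1; split=> [N N_ge2 evenN | N N_ge3 oddN c].
  rewrite RN_interior_quadrilateral // unity_angle_half_even //; last first.
    by rewrite (leq_trans _ N_ge2).
  by rewrite cospi opprK.
have N_gt0 : (0 < N)%N by rewrite (leq_trans _ N_ge3).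
have -> : c = 1 - cos (unity_angle R N N./2).
  by rewrite /c unity_angle_half_odd // [pi - _]addrC cosDpi cosN opprK.
by rewrite RN_interior_quadrilateral // (leq_trans _ N_ge3).
Qed.
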